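(* Fix $0<\epsilon<1$ and let $\lambda_n=\frac{1-\epsilon}{n}$. Then there exists a constant $\kappa'>0$ such that, with probability tending to $1$ as $n\to\infty$, every component of the random induced subgraph $\Gamma_n$ of $Q_2^n$ has at most $\kappa' n$ vertices.
   Context: $Q_2^n$ is the binary $n$-cube: vertex set $\mathbb{F}_2^n$, two vertices adjacent iff they differ in exactly one coordinate. $\Gamma_n$ is the subgraph of $Q_2^n$ induced by a random vertex set in which each vertex is included independently with probability $\lambda_n$. A component is a maximal connected induced subgraph. *)

From Stdlib Require Import Reals.
From mathcomp Require Import all_boot.
Set Implicit Arguments. Unset Strict Implicit. Unset Printing Implicit Defensive.

Definition cube (n : nat) : finType := {ffun 'I_n -> bool}.

Definition cube_adj (n : nat) : rel (cube n) :=
  fun x y => #|[set i : 'I_n | x i != y i]| == 1%N.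

Definition induced_adj (n : nat) (S : {set cube n}) : rel (cube n) :=
  fun x y => [&& x \in S, y \in S & cube_adj x y].

Definition component (n : nat) (S : {set cube n}) (x : cube n) : {set cube n} :=
  [set y | connect (induced_adj S) x y].

(* Probability that the random vertex set (each vertex kept independently with
   probability lam) satisfies P. *)
Definition prob (n : nat) (lam : R) (P : {set cube n} -> bool) : R :=
  \big[Rplus/R0]_(S : {set cube n} | P S)
     (Rmult (pow lam #|S|) (pow (Rminus R1 lam) #|~: S|)).

(* The proof is a Peierls-type counting argument.
   - The event "the component of x is A" holds exactly when A is occupied and
     its outer vertex boundary bd A is vacant, so it has probability
     lam^|A| (1-lam)^|bd A|, and |bd A| <= n |A| in the cube.
   - Comparing with the same event at the density lam' = 1/(n+1) costs at most
     the factor r = (lam/lam') ((1-lam)/(1-lam'))^n per vertex of A; summing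
     over all A, the component of a fixed vertex has more than K vertices with
     probability at most r^K.
   - Since (1-eps) e^eps < 1, r stays below some rho < 1 for large n; a union
     bound over the 2^n vertices with K = kappa n, where rho^kappa <= 1/4,
     bounds the probability of a component larger than kappa n by (1/2)^n. *)

From HB Require Import structures.
From Stdlib Require Import Reals Lra Lia.
From mathcomp Require Import all_boot zify.
Set Implicit Arguments. Unset Strict Implicit. Unset Printing Implicit Defensive.

Lemma Rplus_associative : associative Rplus.
Proof. by move=> x y z; rewrite Rplus_assoc. Qed.
HB.instance Definition _ :=
  Monoid.isComLaw.Build R R0 Rplus Rplus_associative Rplus_comm Rplus_0_l.

Section RealSums.
Local Open Scope R_scope.
Variable I : finType.

Lemma big_Rle (P : pred I) (F G : I -> R) :
  (forall i, P i -> F i <= G i) ->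
  \big[Rplus/R0]_(i | P i) F i <= \big[Rplus/R0]_(i | P i) G i.
Proof.
by move=> FG; elim/big_rec2: _ => [|i x y Pi xy]; [lra | apply: Rplus_le_compat; auto].
Qed.

Lemma big_Rge0 (P : pred I) (F : I -> R) :
  (forall i, P i -> 0 <= F i) -> 0 <= \big[Rplus/R0]_(i | P i) F i.
Proof. by move=> F0; apply: big_ind => [|x y|]; [lra | lra | ]. Qed.

Lemma big_Rmull (P : pred I) (F : I -> R) c :
  c * \big[Rplus/R0]_(i | P i) F i = \big[Rplus/R0]_(i | P i) (c * F i).
Proof. by elim/big_rec2: _ => [|i x y Pi <-]; ring. Qed.

Lemma big_Rsub (P Q : pred I) (F : I -> R) :
  (forall i, P i -> Q i) -> (forall i, 0 <= F i) ->
  \big[Rplus/R0]_(i | P i) F i <= \big[Rplus/R0]_(i | Q i) F i.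
Proof.
move=> PQ F0; rewrite [X in _ <= X](bigID P) /= (eq_bigl P) => [|i].
  by have := @big_Rge0 (fun i => Q i && ~~ P i) F (fun i _ => F0 i); lra.
by case Pi: (P i); rewrite ?andbT ?andbF ?PQ.
Qed.

Lemma big_const_R (c : R) : \big[Rplus/R0]_(i : I) c = INR #|I| * c.
Proof.
rewrite big_const; elim: #|I| => [|k IH]; first by rewrite /=; ring.
by rewrite iterS IH S_INR; ring.
Qed.

End RealSums.

Section ProductMeasure.
Local Open Scope R_scope.
Variable T : finType.

(* Probability that the random set is exactly S when each point of T is kept
   independently with probability lam; [prob] sums these weights. *)
Definition weight (lam : R) (S : {set T}) : R :=
  Rmult (pow lam #|S|) (pow (Rminus R1 lam) #|~: S|).

Lemma weight_ge0 (lam : R) (S : {set T}) : 0 <= lam <= 1 -> 0 <= weight lam S.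
Proof. by move=> lam01; apply: Rmult_le_pos; apply: pow_le; lra. Qed.

Lemma disjoint_setU1r (v : T) (A B : {set T}) :
  [disjoint A & v |: B] = (v \notin A) && [disjoint A & B].
Proof.
by rewrite disjoints_subset setCU subsetI -!disjoints_subset disjoint_sym disjoints1.
Qed.

Lemma cardsC_setU1 (v : T) (C : {set T}) (k : nat) :
  v \notin C -> #|~: C| = k.+1 -> #|~: (v |: C)| = k.
Proof.
move=> vC; have := cardsC C; have := cardsC (v |: C); rewrite cardsU1 vC /=.
by move=> ? ? ?; lia.
Qed.

(* By induction on the number of points
   constrained neither way, splitting on whether one such point is kept. *)
Lemma weight_cylinder (lam : R) (A B : {set T}) : [disjoint A & B] ->
  \big[Rplus/R0]_(S : {set T} | (A \subset S) && [disjoint S & B]) weight lam S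
  = pow lam #|A| * pow (R1 - lam) #|B|.
Proof.
move: {2}#|~: (A :|: B)| (erefl #|~: (A :|: B)|) => k.
elim: k A B => [|k IH] A B free_k AB.
  have coA : ~: A = B.
    apply/setP=> y; have := card0_eq free_k y; rewrite !inE negb_or.
    by move: AB => /pred0P/(_ y) /=; case: (y \in A); case: (y \in B).
  rewrite (big_pred1 A) => [|S]; first by rewrite /weight coA.
  rewrite -coA disjoints_subset setCK /=; apply/andP/eqP => [[AS SA]|->].
    by apply/eqP; rewrite eqEsubset AS andbT.
  by rewrite subxx.
have /card_gt0P [v] : (0 < #|~: (A :|: B)|)%N by rewrite free_k.
rewrite !inE negb_or => /andP [vA vB].
have free_v : #|~: (v |: (A :|: B))| = k.
  by apply: cardsC_setU1; rewrite // !inE negb_or vA.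
rewrite (bigID (fun S : {set T} => v \in S)) /=.
rewrite [X in X + _](eq_bigl (fun S : {set T} =>
                                (v |: A \subset S) && [disjoint S & B])) => [|S]; last first.
  by rewrite subUset sub1set; case: (v \in S); rewrite ?andbT ?andbF.
rewrite [X in _ + X](eq_bigl (fun S : {set T} =>
                                (A \subset S) && [disjoint S & v |: B])) => [|S]; last first.
  rewrite [RHS]andbC disjoint_sym disjoint_setU1r disjoint_sym.
  by case: (v \in S); rewrite /= ?andbT ?andbF // andbC.
have cardvA : #|v |: A| = #|A|.+1 by rewrite cardsU1 vA.
have cardvB : #|v |: B| = #|B|.+1 by rewrite cardsU1 vB.
rewrite !IH ?cardvA ?cardvB /=; first by ring.
- by rewrite setUCA.
- by rewrite disjoint_setU1r vA.
- by rewrite -setUA.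
- by rewrite disjoint_sym disjoint_setU1r vB disjoint_sym.
Qed.

Lemma weight_total (lam : R) : \big[Rplus/R0]_(S : {set T}) weight lam S = 1.
Proof.
rewrite (eq_bigl (fun S : {set T} => (set0 \subset S) && [disjoint S & set0])) => [|S].
  by rewrite weight_cylinder ?cards0 /=; [ring | rewrite disjoints_subset sub0set].
by rewrite sub0set disjoints_subset setC0 subsetT.
Qed.

End ProductMeasure.

Section CubeBoundary.
Variable n : nat.

Definition flip (a : cube n) (i : 'I_n) : cube n :=
  [ffun j => if j == i then ~~ a j else a j].

Lemma cube_adj_flip (a y : cube n) : cube_adj a y -> exists i, y = flip a i.
Proof.
move=> /cards1P [i diff_i]; exists i; apply/ffunP => j; rewrite ffunE.
move/setP: diff_i => /(_ j); rewrite !inE.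
by case: (j == i); case: (a j); case: (y j).
Qed.

(* The outer vertex boundary of A: the vertices outside A adjacent to A.
   A component equal to A forces its boundary to be unoccupied. *)
Definition vboundary (A : {set cube n}) : {set cube n} :=
  [set y | (y \notin A) && [exists a in A, cube_adj a y]].

Lemma disjoint_vboundary (A : {set cube n}) : [disjoint A & vboundary A].
Proof. by apply/pred0P => y /=; rewrite inE; case: (y \in A). Qed.

(* Each vertex has n neighbours, so the boundary has at most |A| n vertices. *)
Lemma card_vboundary (A : {set cube n}) : #|vboundary A| <= #|A| * n.
Proof.
have -> : #|A| * n = #|setX A [set: 'I_n]| by rewrite cardsX cardsT card_ord.
apply: leq_trans (leq_imset_card (fun p => flip p.1 p.2) _).
apply/subset_leq_card/subsetP => y; rewrite inE => /andP [_ /existsP [a /andP [aA ay]]].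
by have [i ->] := cube_adj_flip ay; apply/imsetP; exists (a, i); rewrite ?inE ?aA.
Qed.

End CubeBoundary.

Lemma connect_closed_set (T : finType) (e : rel T) (C : {set T}) (x y : T) :
  (forall u z, u \in C -> e u z -> z \in C) -> x \in C -> connect e x y -> y \in C.
Proof.
move=> closedC xC /connectP [p + ->].
by elim: p x xC => //= z p IH x xC /andP [exz]; apply: IH (closedC _ _ xC exz).
Qed.

Section ComponentEvent.
Variable n : nat.
Implicit Types (S A : {set cube n}) (x : cube n).

Lemma mem_component S x : x \in component S x.
Proof. by rewrite inE connect0. Qed.

Lemma component_sub S x : x \in S -> component S x \subset S.
Proof.
move=> xS; apply/subsetP => y; rewrite inE.
by apply: connect_closed_set xS => u z _ /and3P [].
Qed.

(* The event "the component of x is A" is a cylinder event: it holds exactly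
   when A is occupied and its outer boundary is vacant. *)
Lemma component_eventE (S0 : {set cube n}) x S : x \in S0 ->
  ((x \in S) && (component S x == component S0 x)) =
  ((component S0 x \subset S) && [disjoint S & vboundary (component S0 x)]).
Proof.
move=> xS0; set A := component S0 x.
apply/andP/andP => [[xS /eqP <-]|[AS SbA]].
  split; first exact: component_sub.
  apply/pred0P => y /=; apply/negP => /andP [yS]; rewrite inE.
  case/andP => /negP yA /existsP [a /andP [aA ay]]; apply: yA.
  move: (aA); rewrite !inE => /connect_trans; apply; apply: connect1.
  by rewrite /induced_adj yS ay (subsetP (component_sub xS) _ aA).
split; first exact: (subsetP AS _ (mem_component _ _)).
rewrite eqEsubset; apply/andP; split; apply/subsetP => y.
  rewrite inE; apply: connect_closed_set (mem_component _ _) => u z uA /and3P [_ zS uz].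
  apply/negPn/negP => zA; move/pred0P: SbA => /(_ z) /=; rewrite zS inE zA /=.
  by move/negbT/negP; apply; apply/existsP; exists u; rewrite uA.
rewrite inE => /connectP [p xp ->]; rewrite inE; apply/connectP; exists p => //.
have pA : all (mem A) (x :: p).
  by apply/allP => z /(path_connect xp) xz; rewrite /= inE.
apply: sub_in_path pA xp => u z uA zA /and3P [_ _ uz].
by rewrite /induced_adj (subsetP AS _ uA) (subsetP AS _ zA).
Qed.

End ComponentEvent.

Section PeierlsBound.
Local Open Scope R_scope.

(* The price of lowering the density from lam' to lam, per occupied vertex
   of a set whose boundary has at most n vertices per occupied vertex. *)
Definition peierls_ratio (n : nat) (lam lam' : R) : R :=
  lam / lam' * ((1 - lam) / (1 - lam')) ^ n.

Lemma peierls_ratio_ge0 n lam lam' :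
  0 <= lam <= 1 -> 0 < lam' < 1 -> 0 <= peierls_ratio n lam lam'.
Proof.
move=> lam01 lam'01; have := Rinv_0_lt_compat lam'; have := Rinv_0_lt_compat (1 - lam').
by move=> ? ?; apply: Rmult_le_pos; [|apply: pow_le]; apply: Rmult_le_pos; lra.
Qed.

Lemma cylinder_comparison (n a b K : nat) (lam lam' : R) :
  0 <= lam <= lam' -> 0 < lam' < 1 -> peierls_ratio n lam lam' <= 1 ->
  (K < a)%N -> (b <= a * n)%N ->
  lam ^ a * (1 - lam) ^ b <= peierls_ratio n lam lam' ^ K * (lam' ^ a * (1 - lam') ^ b).
Proof.
move=> lam_le lam'01 r1 Ka ban; have r0 := @peierls_ratio_ge0 n lam lam' ltac:(lra) lam'01.
move: r0 r1; rewrite /peierls_ratio.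
set t := lam / lam'; set s := (1 - lam) / (1 - lam') => r0 r1.
have lamE : lam = t * lam' by rewrite /t; field; lra.
have lamcE : 1 - lam = s * (1 - lam') by rewrite /s; field; lra.
have t0 : 0 <= t by nra.
have s1 : 1 <= s by nra.
clearbody t s; set r := t * s ^ n in r0 r1 *.
have -> : lam ^ a * (1 - lam) ^ b = (t ^ a * s ^ b) * (lam' ^ a * (1 - lam') ^ b).
  by rewrite lamcE lamE !Rpow_mult_distr; ring.
apply: Rmult_le_compat_r; first by apply: Rmult_le_pos; apply: pow_le; lra.
have boundary_le : t ^ a * s ^ b <= r ^ a.
  rewrite /r Rpow_mult_distr -pow_mult; apply: Rmult_le_compat_l; first exact: pow_le.
  by apply: Rle_pow => //; apply/leP; lia.
apply: Rle_trans boundary_le _.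
rewrite -(subnKC (ltnW Ka)) pow_add -[X in _ <= X]Rmult_1_r.
apply: Rmult_le_compat_l; first exact: pow_le.
by rewrite -(pow1 (a - K)); apply: pow_incr; lra.
Qed.

End PeierlsBound.

Section ComponentTail.
Local Open Scope R_scope.
Variable n : nat.

Lemma component_event_prob (lam : R) (x : cube n) (A : {set cube n}) :
  \big[Rplus/R0]_(S : {set cube n} | (x \in S) && (component S x == A)) weight lam S
  = if [exists S0 : {set cube n}, (x \in S0) && (component S0 x == A)]
    then lam ^ #|A| * (R1 - lam) ^ #|vboundary A| else 0.
Proof.
case: existsP => [[S0 /andP [xS0 /eqP <-]] | none].
  rewrite (eq_bigl _ _ (fun S => component_eventE S xS0)).
  by rewrite weight_cylinder ?disjoint_vboundary.
by rewrite big_pred0 // => S; apply/negP => eventS; apply: none; exists S.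
Qed.

(* Peierls bound: the component of a fixed vertex exceeds K vertices with
   probability at most r^K, by comparing each possible component with the
   same event at the larger density lam'. *)
Lemma component_tail (lam lam' : R) (x : cube n) (K : nat) :
  0 <= lam <= lam' -> 0 < lam' < 1 -> peierls_ratio n lam lam' <= 1 ->
  \big[Rplus/R0]_(S : {set cube n} | (x \in S) && (K < #|component S x|)%N) weight lam S
  <= peierls_ratio n lam lam' ^ K.
Proof.
move=> lam_le lam'01 r1; set r := peierls_ratio n lam lam'.
have r0 : 0 <= r by apply: peierls_ratio_ge0; lra.
have event_le A :
    \big[Rplus/R0]_(S : {set cube n} | ((x \in S) && (K < #|component S x|)%N)
                                      && (component S x == A)) weight lam S
    <= r ^ K * \big[Rplus/R0]_(S : {set cube n} | (x \in S) && (component S x == A))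
                  weight lam' S.
  rewrite (eq_bigl (fun S : {set cube n} =>
                      (K < #|A|)%N && ((x \in S) && (component S x == A)))); last first.
    by move=> S; case: eqP => [->|_]; rewrite ?andbF // ?andbT andbC.
  case: ltnP => [KA|_] /=; last first.
    rewrite big_pred0 //; apply: Rmult_le_pos; first exact: pow_le.
    by apply: big_Rge0 => S _; apply: weight_ge0; lra.
  rewrite (component_event_prob lam) (component_event_prob lam').
  case: ifP => _; last by rewrite Rmult_0_r; apply: Rle_refl.
  exact: cylinder_comparison (card_vboundary A).
rewrite (partition_big (fun S => component S x) predT) //=.
apply: Rle_trans; first by apply: big_Rle => A _; exact: event_le.
rewrite -big_Rmull -[X in _ <= X]Rmult_1_r; apply: Rmult_le_compat_l; first exact: pow_le.
rewrite -(partition_big (P := fun S : {set cube n} => x \in S)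
                        (fun S => component S x) predT) //.
rewrite -(weight_total (cube n) lam'); apply: big_Rsub => // S.
by apply: weight_ge0; lra.
Qed.

End ComponentTail.

Definition small_components (n : nat) (kappa : R) (S : {set cube n}) : bool :=
  [forall x in S, Rle_dec (INR #|component S x|) (Rmult kappa (INR n)) : bool].

Section UnionBound.
Local Open Scope R_scope.
Variable n : nat.

Lemma INR_card_cube : INR #|cube n| = 2 ^ n.
Proof.
rewrite card_ffun card_bool card_ord; elim: n => [|k IH] //.
by rewrite expnS -multE mult_INR IH.
Qed.

Lemma not_small_components (m : nat) (S : {set cube n}) :
  ~~ small_components (INR m) S ->
  exists2 x, x \in S & (m * n < #|component S x|)%N.
Proof.
move=> /forallPn [x]; rewrite negb_imply => /andP [xS]; case: Rle_dec => // not_le _.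
by exists x => //; apply/ltP/INR_lt; rewrite -multE mult_INR; apply: Rnot_le_lt.
Qed.

(* Union bound over the 2^n vertices of the Peierls tail bound with K = m n. *)
Lemma large_component_prob (m : nat) (lam lam' : R) :
  0 <= lam <= lam' -> 0 < lam' < 1 -> peierls_ratio n lam lam' <= 1 ->
  \big[Rplus/R0]_(S : {set cube n} | ~~ small_components (INR m) S) weight lam S
  <= 2 ^ n * peierls_ratio n lam lam' ^ (m * n).
Proof.
move=> lam_le lam'01 r1.
have w0 (S : {set cube n}) : 0 <= weight lam S by apply: weight_ge0; lra.
pose E (S : {set cube n}) (x : cube n) := (x \in S) && (m * n < #|component S x|)%N.
apply: Rle_trans (_ : _ <= \big[Rplus/R0]_(S : {set cube n} | ~~ small_components (INR m) S)
                          \big[Rplus/R0]_(x | E S x) weight lam S) _.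
  apply: big_Rle => S /not_small_components [x xS xlarge].
  rewrite (bigD1 x) /E ?xS //= -[X in X <= _]Rplus_0_r; apply: Rplus_le_compat_l.
  exact: big_Rge0.
apply: Rle_trans (_ : _ <= \big[Rplus/R0]_(S : {set cube n})
                          \big[Rplus/R0]_(x | E S x) weight lam S) _.
  by apply: big_Rsub => // S; apply: big_Rge0.
rewrite (exchange_big_dep predT) //=.
apply: Rle_trans (_ : \big[Rplus/R0]_(x : cube n) peierls_ratio n lam lam' ^ (m * n) <= _).
  by apply: big_Rle => x _; apply: component_tail.
by rewrite big_const_R INR_card_cube; apply: Rle_refl.
Qed.

Lemma prob_complement (lam : R) (P : pred {set cube n}) :
  prob lam P = 1 - \big[Rplus/R0]_(S : {set cube n} | ~~ P S) weight lam S.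
Proof.
have -> : prob lam P = \big[Rplus/R0]_(S : {set cube n} | P S) weight lam S by [].
by rewrite -(weight_total (cube n) lam) [in RHS](bigID P) /=; ring.
Qed.

End UnionBound.

Section Subcritical.
Local Open Scope R_scope.
Variable eps : R.
Hypothesis eps01 : 0 < eps < 1.

Lemma exp_pow (x : R) (n : nat) : exp x ^ n = exp (INR n * x).
Proof.
elim: n => [|k IH]; first by rewrite /= Rmult_0_l exp_0.
by rewrite S_INR /= IH -exp_plus; congr exp; ring.
Qed.

(* The expected number of occupied neighbours, (1-eps), stays below 1 even
   after the factor exp eps paid for the vacant boundary. *)
Lemma subcritical_branching : 0 < (1 - eps) * exp eps < 1.
Proof.
have e0 := exp_pos eps; have below := exp_ineq1 (- eps) ltac:(lra).
have inv : exp (- eps) * exp eps = 1 by rewrite -exp_plus Rplus_opp_l exp_0.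
split; first nra.
by rewrite -inv; apply: Rmult_lt_compat_r; lra.
Qed.

(* For n >= 1/eps the density (1-eps)/n lies below the comparison density
   1/(n+1), which maximises lam (1-lam)^n. *)
Lemma subcritical_density (n : nat) :
  1 <= eps * INR n -> 0 <= (1 - eps) / INR n <= / (INR n + 1).
Proof.
move=> large; have n0 : 0 < INR n by nra.
have n0' : 0 < / INR n by apply: Rinv_0_lt_compat.
split; first by rewrite /Rdiv; nra.
apply: (Rmult_le_reg_r (INR n * (INR n + 1))); first nra.
have -> : (1 - eps) / INR n * (INR n * (INR n + 1)) = (1 - eps) * (INR n + 1) by field; lra.
have -> : / (INR n + 1) * (INR n * (INR n + 1)) = INR n by field; lra.
nra.
Qed.

Lemma peierls_ratio_subcritical (n : nat) : (0 < n)%N ->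
  peierls_ratio n ((1 - eps) / INR n) (/ (INR n + 1))
  <= (1 - eps) * exp eps * (1 + / INR n).
Proof.
move=> n_pos; have n1 : 1 <= INR n by apply: (le_INR 1); apply/leP.
have n0 : 0 < INR n by lra.
set lam := (1 - eps) / INR n; set u := / INR n.
have u0 : 0 < u by apply: Rinv_0_lt_compat.
have nu : INR n * u = 1 by rewrite /u; field; lra.
have lam1 : lam <= 1 by rewrite /lam /Rdiv -/u; nra.
rewrite /peierls_ratio.
have -> : lam / / (INR n + 1) = (1 - eps) * (1 + u) by rewrite /lam /u; field; lra.
have -> : (1 - lam) / (1 - / (INR n + 1)) = (1 - lam) * (1 + u).
  by rewrite /u; field; split; lra.
have boundary : ((1 - lam) * (1 + u)) ^ n <= exp eps.
  apply: Rle_trans (_ : (exp (- lam) * exp u) ^ n <= _).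
    apply: pow_incr; split; first by apply: Rmult_le_pos; lra.
    have := exp_ineq1_le (- lam); have := exp_ineq1_le u.
    by move=> ? ?; apply: Rmult_le_compat; lra.
  rewrite -exp_plus exp_pow; apply: Req_le; congr exp.
  by rewrite /lam /u; field; lra.
have -> : (1 - eps) * exp eps * (1 + u) = (1 - eps) * (1 + u) * exp eps by ring.
by apply: Rmult_le_compat_l => //; apply: Rmult_le_pos; lra.
Qed.

Lemma peierls_ratio_eventually :
  exists2 rho, 0 <= rho < 1 & exists N, forall n, (N <= n)%N ->
    1 <= eps * INR n /\ peierls_ratio n ((1 - eps) / INR n) (/ (INR n + 1)) <= rho.
Proof.
have [q0 q1] := subcritical_branching; set q := (1 - eps) * exp eps in q0 q1 *.
exists ((1 + q) / 2); first lra.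
have [N N_large] := INR_unbounded (/ eps + 2 / (1 - q)).
have eps_inv : 0 < / eps by apply: Rinv_0_lt_compat; lra.
have q_inv : 0 < 2 / (1 - q) by apply: Rdiv_lt_0_compat; lra.
exists N => n /leP/le_INR Nn; have n0 : 0 < INR n by lra.
have eps_n : 1 <= eps * INR n.
  have -> : 1 = eps * / eps by field; lra.
  by apply: Rmult_le_compat_l; lra.
split => //; apply: Rle_trans (peierls_ratio_subcritical _) _.
  by apply/ltP/INR_lt; rewrite /=; lra.
have u0 : 0 < / INR n by apply: Rinv_0_lt_compat.
have qn : 2 <= (1 - q) * INR n.
  have -> : 2 = (1 - q) * (2 / (1 - q)) by field; lra.
  by apply: Rmult_le_compat_l; lra.
have nu : INR n * / INR n = 1 by field; lra.
rewrite -/q; nra.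
Qed.

Lemma large_components_vanish : exists m N : nat, forall n, (N <= n)%N ->
  0 <= \big[Rplus/R0]_(S : {set cube n} | ~~ small_components (INR m.+1) S)
          weight ((1 - eps) / INR n) S <= (1 / 2) ^ n.
Proof.
have [rho rho01 [N ratio_le]] := peierls_ratio_eventually.
have [M rhoM] := pow_lt_1_zero rho ltac:(rewrite Rabs_right; lra) (1 / 4) ltac:(lra).
exists M, N => n Nn; have [eps_n r_le] := ratio_le n Nn.
have n0 : 0 < INR n by nra.
have lam_le := subcritical_density eps_n.
have lam'01 : 0 < / (INR n + 1) < 1.
  split; first by apply: Rinv_0_lt_compat; lra.
  by rewrite -Rinv_1; apply: Rinv_1_lt_contravar; lra.
set r := peierls_ratio n _ _ in r_le.
have r0 : 0 <= r by apply: peierls_ratio_ge0; lra.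
have r1 : r <= 1 by lra.
split; first by apply: big_Rge0 => S _; apply: weight_ge0; lra.
apply: Rle_trans (large_component_prob M.+1 lam_le lam'01 r1) _.
have rM : r ^ M.+1 <= 1 / 4.
  apply: Rle_trans (pow_incr r rho M.+1 (conj r0 r_le)) _.
  have := rhoM M.+1 (le_S _ _ (le_n M)); rewrite Rabs_right; first lra.
  by apply: Rle_ge; apply: pow_le; lra.
have -> : (1 / 2) ^ n = 2 ^ n * (1 / 4) ^ n by rewrite -Rpow_mult_distr; congr pow; field.
rewrite -multE pow_mult; apply: Rmult_le_compat_l; first by apply: pow_le; lra.
by apply: pow_incr; split => //; apply: pow_le.
Qed.

End Subcritical.

(* With kappa the integer of [large_components_vanish], the good event has
   probability 1 - B_n where 0 <= B_n <= (1/2)^n, so it tends to 1. *)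
Unset Implicit Arguments.
Local Open Scope R_scope.
Theorem mainTheorem3 (eps : R) (heps0 : Rlt R0 eps) (heps1 : Rlt eps R1) :
  exists kappa : R, Rlt R0 kappa /\
    Un_cv (fun n : nat =>
             prob (Rdiv (Rminus R1 eps) (INR n))
               (fun S : {set cube n} =>
                  [forall x in S,
                     Rle_dec (INR #|component S x|) (Rmult kappa (INR n)) : bool]))
          R1.
Proof.
have eps01 : 0 < eps < 1 by split.
have [m [N large_small]] := large_components_vanish eps01.
exists (INR m.+1); split; first exact: (lt_0_INR _ (Nat.lt_0_succ m)).
move=> d d0; have [N' half_small] := pow_lt_1_zero (1 / 2) ltac:(rewrite Rabs_right; lra) d d0.
exists (N + N')%coq_nat => n nN; rewrite /R_dist prob_complement.
have [bad0 bad_le] := large_small n ltac:(lia).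
have := half_small n ltac:(lia); rewrite Rabs_right; last by apply: Rle_ge; apply: pow_le; lra.
set B := \big[Rplus/R0]_(S | _) _ in bad0 bad_le *.
by rewrite (_ : 1 - B - R1 = - B); [rewrite Rabs_Ropp Rabs_right; lra | ring].
Qed.
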